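(* Let $\phi=\tilde p/p$ be an irreducible rational inner function on $\mathbb{D}^3$ of degree $(m,n,1)$ with $p(z)=p_1(z_1,z_2)+z_3p_2(z_1,z_2)$, $\tilde p(z)=z_3\tilde p_1(z_1,z_2)+\tilde p_2(z_1,z_2)$, and for $\lambda\in\mathbb{T}$ let $q_\lambda=\lambda p_1-\tilde p_2$. Let $(\tau_1,\tau_2)\in\mathbb{T}^2$. Then: (A) if $(\tau_1,\tau_2,\tau_3)\in\mathcal{Z}_p$ for exactly one $\tau_3\in\mathbb{T}$, then for $\lambda\in\mathbb{T}$, $\phi^*(\tau)=\lambda$ if and only if $q_\lambda(\tau_1,\tau_2)=0$ (here $\tau=(\tau_1,\tau_2,\tau_3')$ with any $\tau_3'\in\mathbb{T}$); (B) if $\{(\tau_1,\tau_2)\}\times\mathbb{T}\subseteq\mathcal{Z}_p$, then $q_\lambda(\tau_1,\tau_2)=0$ for every $\lambda\in\mathbb{T}$.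
   Context: A rational inner function (RIF) on $\mathbb{D}^3$ is a rational function holomorphic on the tridisk with unimodular radial limits a.e. on $\mathbb{T}^3$; it is written $\phi=\tilde p/p$ with $p$ zero-free on $\mathbb{D}^3$, $p,\tilde p$ without common factors. For degree $(m,n,1)$, $\tilde p(z)=z_1^mz_2^nz_3\overline{p(1/\bar z_1,1/\bar z_2,1/\bar z_3)}$ and $\tilde p_j(z_1,z_2)=z_1^mz_2^n\overline{p_j(1/\bar z_1,1/\bar z_2)}$. $\phi^*(\tau)$ denotes the nontangential limit of $\phi$ at $\tau\in\mathbb{T}^3$ (limit as $z\to\tau$ in $\mathbb{D}^3$ with $\|z-\tau\|\le C(1-\|z\|)$), which exists for every RIF at every point of $\mathbb{T}^3$; under the hypothesis of (A) it does not depend on the third coordinate of $\tau$. $\mathcal{Z}_p$ is the zero set of $p$. *)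

(* Polynomials in three
   variables are nested univariate polynomials:
     {poly {poly {poly C}}}  with the OUTER variable = z3, middle = z2,
                                  inner variable = z1;
   bivariate ones are {poly {poly C}} with outer = z2, inner = z1. *)
From mathcomp Require Import all_boot all_order all_algebra.
From mathcomp Require Import reals.
From mathcomp Require Export complex.
Set Implicit Arguments. Unset Strict Implicit. Unset Printing Implicit Defensive.
Import Order.TTheory GRing.Theory Num.Theory.
Local Open Scope ring_scope.

Notation poly2 R := {poly {poly (complex R)}}.
Notation poly3 R := {poly {poly {poly (complex R)}}}.

Section Defs.
Variable R : realType.
Local Notation C := R[i].

Definition nrm (z : C) : R := Normc.normc z.


Definition eval2 (P : poly2 R) (z1 z2 : C) : C := (P.[z2%:P]).[z1].
Definition eval3 (P : poly3 R) (z1 z2 z3 : C) : C :=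
  ((P.[(z3%:P)%:P]).[z2%:P]).[z1].

Definition deg_le2 (m n : nat) (P : poly2 R) : Prop :=
  (size P <= n.+1)%N /\ forall j, (size (P`_j)%R <= m.+1)%N.

Definition deg_le3 (m n k : nat) (P : poly3 R) : Prop :=
  (size P <= k.+1)%N /\ forall l, deg_le2 m n (P`_l).

Definition is_refl2 (m n : nat) (P Pt : poly2 R) : Prop :=
  forall z1 z2 : C, z1 != 0 -> z2 != 0 ->
    eval2 Pt z1 z2 =
      z1 ^+ m * z2 ^+ n * Num.conj (eval2 P (Num.conj z1)^-1 (Num.conj z2)^-1).

Definition is_refl3 (m n : nat) (P Pt : poly3 R) : Prop :=
  forall z1 z2 z3 : C, z1 != 0 -> z2 != 0 -> z3 != 0 ->
    eval3 Pt z1 z2 z3 =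
      z1 ^+ m * z2 ^+ n * z3 *
        Num.conj (eval3 P (Num.conj z1)^-1 (Num.conj z2)^-1 (Num.conj z3)^-1).

Definition divides3 (f P : poly3 R) : Prop := exists g : poly3 R, P = f * g.

Definition no_common_factor3 (P Q : poly3 R) : Prop :=
  forall f : poly3 R, divides3 f P -> divides3 f Q -> f \is a GRing.unit.

Definition irreducible3 (P : poly3 R) : Prop :=
  P != 0 /\ P \isn't a GRing.unit /\
  forall f g : poly3 R, P = f * g -> f \is a GRing.unit \/ g \is a GRing.unit.

Definition zero_free_D3 (P : poly3 R) : Prop :=
  forall z1 z2 z3 : C, nrm z1 < 1 -> nrm z2 < 1 -> nrm z3 < 1 ->
    eval3 P z1 z2 z3 != 0.

Definition ratfun3 (P Pt : poly3 R) (z1 z2 z3 : C) : C :=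
  eval3 Pt z1 z2 z3 / eval3 P z1 z2 z3.

Definition nrm3 (z1 z2 z3 : C) : R := Num.max (nrm z1) (Num.max (nrm z2) (nrm z3)).

Definition ntlim (f : C -> C -> C -> C) (t1 t2 t3 L : C) : Prop :=
  forall c : R, 0 < c -> forall eps : R, 0 < eps -> exists2 delta : R, 0 < delta &
    forall z1 z2 z3 : C, nrm z1 < 1 -> nrm z2 < 1 -> nrm z3 < 1 ->
      nrm3 (z1 - t1) (z2 - t2) (z3 - t3) < delta ->
      nrm3 (z1 - t1) (z2 - t2) (z3 - t3) <= c * (1 - nrm3 z1 z2 z3) ->
      nrm (f z1 z2 z3 - L) < eps.

End Defs.

(* Write p = p1 + z3 p2, a = p1(t1,t2), b = p2(t1,t2) and T = t1^m t2^n.  On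
   the torus the reflection gives pt(t1,t2,s3) = T (s3 conj a + conj b), and
   p(t1,t2,.) vanishes identically iff it vanishes at +1 and -1, i.e. iff
   a = b = 0; this gives (B), and under (A) it gives b <> 0 and a = - t3 b.
   Then pt - mu p vanishes on the whole fiber {(t1,t2)} x C, where
   mu = T conj b / a, so phi has nontangential limit mu at every (t1,t2,s3):
   for s3 <> t3 because p(t1,t2,s3) <> 0, and at s3 = t3 because there
   pt - mu p vanishes to second order while |p(z)| >= |b|/2 (1 - ||z||).
   The first-order terms cancel because p has no zeros in the tridisk, so
   |p2| <= |p1| on the bidisk; comparing both sides along rays entering the
   bidisk at (t1,t2) shows that the partial derivatives of p1 + t3 p2 are
   real multiples of conj(t_j) t3 b.  Hence phi*(tau) = lambda iff
   lambda = mu iff q_lambda(t1,t2) = lambda a - T conj b = 0. *)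

From mathcomp Require Import all_boot all_order all_algebra.
From mathcomp Require Import reals.
From mathcomp Require Import complex.
From mathcomp Require Import ring lra.
Import Order.TTheory GRing.Theory Num.Theory.
Set Implicit Arguments. Unset Strict Implicit. Unset Printing Implicit Defensive.
Local Open Scope ring_scope.
Local Open Scope complex_scope.

Section ComplexNorm.
Variable R : realType.
Local Notation C := R[i].
Implicit Types (x y t : C) (r : R).

Lemma nrm_ge0 x : 0 <= nrm x.
Proof. by case: x => a b; exact: sqrtr_ge0. Qed.

Lemma nrm0 : nrm (0 : C) = 0.
Proof. exact: Normc.normc0. Qed.

Lemma nrm1 : nrm (1 : C) = 1.
Proof. exact: Normc.normc1. Qed.

Lemma nrm_eq0 x : nrm x = 0 -> x = 0.
Proof. exact: Normc.eq0_normc. Qed.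

Lemma nrm_gt0 x : x != 0 -> 0 < nrm x.
Proof. by move=> x0; rewrite lt_def nrm_ge0 andbT; apply: contra_neq x0; apply: nrm_eq0. Qed.

Lemma nrmM x y : nrm (x * y) = nrm x * nrm y.
Proof. exact: Normc.normcM. Qed.

Lemma nrmV x : nrm x^-1 = (nrm x)^-1.
Proof. exact: Normc.normcV. Qed.

Lemma nrmN x : nrm (- x) = nrm x.
Proof. exact: normcN. Qed.

Lemma nrmD x y : nrm (x + y) <= nrm x + nrm y.
Proof. exact: le_normcD. Qed.

Lemma nrm_distC x y : nrm (x - y) = nrm (y - x).
Proof. by rewrite -nrmN opprB. Qed.

Lemma nrm_conj x : nrm (Num.conj x) = nrm x.
Proof. by case: x => a b; rewrite /nrm /Normc.normc /= sqrrN. Qed.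

Lemma nrm_real r : 0 <= r -> nrm r%:C = r.
Proof. by move=> r0; rewrite /nrm /Normc.normc /= expr0n /= addr0 sqrtr_sqr ger0_norm. Qed.

Lemma lerB_nrmD x y : nrm x - nrm y <= nrm (x + y).
Proof. by have := nrmD (x + y) (- y); rewrite addrK nrmN; lra. Qed.

Lemma lerB_nrmB x y : nrm x - nrm y <= nrm (x - y).
Proof. by have := lerB_nrmD x (- y); rewrite nrmN. Qed.

Lemma sqr_nrm x : nrm x ^+ 2 = complex.Re x ^+ 2 + complex.Im x ^+ 2.
Proof. by case: x => a b /=; rewrite sqr_sqrtr // addr_ge0 // sqr_ge0. Qed.

Lemma Re_le_nrm x : complex.Re x <= nrm x.
Proof. by have := sqr_nrm x; have := nrm_ge0 x; have := sqr_ge0 (complex.Im x); nra. Qed.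

Lemma Re_ge_Nnrm x : - nrm x <= complex.Re x.
Proof. by have := sqr_nrm x; have := nrm_ge0 x; have := sqr_ge0 (complex.Im x); nra. Qed.

Lemma mul_conj x : x * Num.conj x = (nrm x ^+ 2)%:C.
Proof.
case: x => a b; rewrite sqr_nrm /=.
by apply/eqP; rewrite eq_complex /=; apply/andP; split; apply/eqP; ring.
Qed.

Lemma sqr_nrmB x y :
  nrm (x - y) ^+ 2 = nrm x ^+ 2 - 2 * complex.Re (x * Num.conj y) + nrm y ^+ 2.
Proof. by rewrite !sqr_nrm; case: x => a b; case: y => c d /=; ring. Qed.

Lemma unimodular_neq0 t : nrm t = 1 -> t != 0.
Proof. by move=> t1; apply/eqP => t0; move: t1; rewrite t0 nrm0; lra. Qed.

Lemma unimodular_addr_neq0 t h : nrm t = 1 -> nrm h <= 2^-1 -> t + h != 0.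
Proof. by move=> t1 hs; apply/eqP => th0; have := lerB_nrmD t h; rewrite th0 nrm0 t1; lra. Qed.

Lemma unimodular_conj t : nrm t = 1 -> Num.conj t = t^-1.
Proof.
move=> t1; apply: (mulfI (unimodular_neq0 t1)).
by rewrite mul_conj t1 expr1n divff // unimodular_neq0.
Qed.

Lemma conj_id_of_Im0 x : complex.Im x = 0 -> Num.conj x = x.
Proof. by case: x => a b /= ->; rewrite /Num.conj /= oppr0. Qed.

End ComplexNorm.

Section AffineApprox.
Variable R : realType.
Local Notation C := R[i].
Implicit Types (r : R).

Definition l1nrm3 (h1 h2 h3 : C) : R := nrm h1 + nrm h2 + nrm h3.

Definition affine_approx r (f : C -> C -> C -> C) (f0 c1 c2 c3 : C) :=
  exists2 K : R, 0 <= K & forall h1 h2 h3,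
    nrm h1 <= r -> nrm h2 <= r -> nrm h3 <= r ->
    nrm (f h1 h2 h3 - (f0 + (c1 * h1 + c2 * h2 + c3 * h3)))
      <= K * l1nrm3 h1 h2 h3 ^+ 2.

Lemma l1nrm3_ge0 h1 h2 h3 : 0 <= l1nrm3 h1 h2 h3.
Proof.
by rewrite /l1nrm3; have := nrm_ge0 h1; have := nrm_ge0 h2; have := nrm_ge0 h3; lra.
Qed.

Lemma nrm_linear3_le c1 c2 c3 h1 h2 h3 :
  nrm (c1 * h1 + c2 * h2 + c3 * h3) <= (nrm c1 + nrm c2 + nrm c3) * l1nrm3 h1 h2 h3.
Proof.
have := nrmD (c1 * h1 + c2 * h2) (c3 * h3); have := nrmD (c1 * h1) (c2 * h2).
rewrite /l1nrm3 !nrmM.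
have := nrm_ge0 h1; have := nrm_ge0 h2; have := nrm_ge0 h3.
have := nrm_ge0 c1; have := nrm_ge0 c2; have := nrm_ge0 c3.
nra.
Qed.

Lemma eq_affine_approx r f g f0 c1 c2 c3 g0 d1 d2 d3 :
  affine_approx r f f0 c1 c2 c3 ->
  (forall h1 h2 h3, nrm h1 <= r -> nrm h2 <= r -> nrm h3 <= r -> f h1 h2 h3 = g h1 h2 h3) ->
  f0 = g0 -> c1 = d1 -> c2 = d2 -> c3 = d3 -> affine_approx r g g0 d1 d2 d3.
Proof.
move=> [K K0 Hf] fg <- <- <- <-; exists K => // h1 h2 h3 b1 b2 b3.
by rewrite -fg //; apply: Hf.
Qed.

Lemma affine_approx_le r r' f f0 c1 c2 c3 :
  r' <= r -> affine_approx r f f0 c1 c2 c3 -> affine_approx r' f f0 c1 c2 c3.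
Proof. by move=> rr [K K0 Hf]; exists K => // h1 h2 h3 *; apply: Hf; lra. Qed.

Lemma affine_approx_cst r a : affine_approx r (fun _ _ _ => a) a 0 0 0.
Proof. by exists 0 => // *; rewrite !mul0r !addr0 subrr nrm0. Qed.

Lemma affine_approx_shift1 r t : affine_approx r (fun h1 _ _ => t + h1) t 1 0 0.
Proof. by exists 0 => // *; rewrite !mul0r !mul1r !addr0 subrr nrm0. Qed.

Lemma affine_approx_shift2 r t : affine_approx r (fun _ h2 _ => t + h2) t 0 1 0.
Proof. by exists 0 => // *; rewrite !mul0r !mul1r add0r addr0 subrr nrm0. Qed.

Lemma affine_approx_shift3 r t : affine_approx r (fun _ _ h3 => t + h3) t 0 0 1.
Proof. by exists 0 => // *; rewrite !mul0r !mul1r !add0r subrr nrm0. Qed.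

Lemma affine_approxD r f g f0 c1 c2 c3 g0 d1 d2 d3 :
  affine_approx r f f0 c1 c2 c3 -> affine_approx r g g0 d1 d2 d3 ->
  affine_approx r (fun h1 h2 h3 => f h1 h2 h3 + g h1 h2 h3)
    (f0 + g0) (c1 + d1) (c2 + d2) (c3 + d3).
Proof.
move=> [K K0 Hf] [L L0 Hg]; exists (K + L) => [|h1 h2 h3 b1 b2 b3]; first lra.
pose u := f h1 h2 h3 - (f0 + (c1 * h1 + c2 * h2 + c3 * h3)).
pose v := g h1 h2 h3 - (g0 + (d1 * h1 + d2 * h2 + d3 * h3)).
have -> : f h1 h2 h3 + g h1 h2 h3
    - (f0 + g0 + ((c1 + d1) * h1 + (c2 + d2) * h2 + (c3 + d3) * h3)) = u + v.
  by rewrite /u /v; ring.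
by apply: le_trans (nrmD _ _) _; have := Hf _ _ _ b1 b2 b3; have := Hg _ _ _ b1 b2 b3; lra.
Qed.

Lemma affine_approxZ r (k : C) f f0 c1 c2 c3 :
  affine_approx r f f0 c1 c2 c3 ->
  affine_approx r (fun h1 h2 h3 => k * f h1 h2 h3) (k * f0) (k * c1) (k * c2) (k * c3).
Proof.
move=> [K K0 Hf]; exists (nrm k * K) => [|h1 h2 h3 b1 b2 b3].
  exact: mulr_ge0 (nrm_ge0 k) K0.
have -> : k * f h1 h2 h3 - (k * f0 + (k * c1 * h1 + k * c2 * h2 + k * c3 * h3))
  = k * (f h1 h2 h3 - (f0 + (c1 * h1 + c2 * h2 + c3 * h3))) by ring.
by rewrite nrmM -mulrA; apply: ler_wpM2l; [exact: nrm_ge0 | exact: Hf].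
Qed.

Lemma affine_approx_lipschitz r f f0 c1 c2 c3 :
  affine_approx r f f0 c1 c2 c3 ->
  exists2 M : R, 0 <= M & forall h1 h2 h3,
    nrm h1 <= r -> nrm h2 <= r -> nrm h3 <= r ->
    nrm (f h1 h2 h3 - f0) <= M * l1nrm3 h1 h2 h3.
Proof.
move=> [K K0 Hf]; exists (nrm c1 + nrm c2 + nrm c3 + K * (3 * `|r|)).
  by have := nrm_ge0 c1; have := nrm_ge0 c2; have := nrm_ge0 c3; have := normr_ge0 r; nra.
move=> h1 h2 h3 b1 b2 b3; set lin := c1 * h1 + c2 * h2 + c3 * h3.
have -> : f h1 h2 h3 - f0 = (f h1 h2 h3 - (f0 + lin)) + lin by ring.
apply: le_trans (nrmD _ _) _.
have := Hf _ _ _ b1 b2 b3; have := nrm_linear3_le c1 c2 c3 h1 h2 h3.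
have : l1nrm3 h1 h2 h3 <= 3 * `|r| by have := ler_norm r; rewrite /l1nrm3; lra.
have := mulr_ge0 K0 (l1nrm3_ge0 h1 h2 h3); have := l1nrm3_ge0 h1 h2 h3.
rewrite -/lin; set s := l1nrm3 h1 h2 h3.
by rewrite expr2; nra.
Qed.

Lemma affine_approxM r f g f0 c1 c2 c3 g0 d1 d2 d3 :
  affine_approx r f f0 c1 c2 c3 -> affine_approx r g g0 d1 d2 d3 ->
  affine_approx r (fun h1 h2 h3 => f h1 h2 h3 * g h1 h2 h3) (f0 * g0)
    (f0 * d1 + g0 * c1) (f0 * d2 + g0 * c2) (f0 * d3 + g0 * c3).
Proof.
move=> Hf Hg.
have [Mf Mf0 Lf] := affine_approx_lipschitz Hf.
have [Mg Mg0 Lg] := affine_approx_lipschitz Hg.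
case: Hf => [K K0 Hf]; case: Hg => [L L0 Hg].
exists (nrm f0 * L + nrm g0 * K + Mf * Mg) => [|h1 h2 h3 b1 b2 b3].
  by have := nrm_ge0 f0; have := nrm_ge0 g0; nra.
pose u := f h1 h2 h3 - (f0 + (c1 * h1 + c2 * h2 + c3 * h3)).
pose v := g h1 h2 h3 - (g0 + (d1 * h1 + d2 * h2 + d3 * h3)).
have -> : f h1 h2 h3 * g h1 h2 h3 - (f0 * g0 + ((f0 * d1 + g0 * c1) * h1
      + (f0 * d2 + g0 * c2) * h2 + (f0 * d3 + g0 * c3) * h3))
    = f0 * v + g0 * u + (f h1 h2 h3 - f0) * (g h1 h2 h3 - g0) by rewrite /u /v; ring.
apply: le_trans (nrmD _ _) _; apply: le_trans (lerD (nrmD _ _) (lexx _)) _.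
rewrite !nrmM.
have := Hf _ _ _ b1 b2 b3; have := Hg _ _ _ b1 b2 b3.
have := Lf _ _ _ b1 b2 b3; have := Lg _ _ _ b1 b2 b3; rewrite -/u -/v.
have := nrm_ge0 f0; have := nrm_ge0 g0; have := l1nrm3_ge0 h1 h2 h3.
have := nrm_ge0 (f h1 h2 h3 - f0); have := nrm_ge0 (g h1 h2 h3 - g0).
set s := l1nrm3 h1 h2 h3; move=> *; nra.
Qed.

Lemma affine_approx_horner r (q : {poly C}) g g0 d1 d2 d3 :
  affine_approx r g g0 d1 d2 d3 ->
  affine_approx r (fun h1 h2 h3 => q.[g h1 h2 h3]) q.[g0]
    (q^`().[g0] * d1) (q^`().[g0] * d2) (q^`().[g0] * d3).
Proof.
move=> Hg; elim/poly_ind: q => [|q k IH].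
  apply: eq_affine_approx (affine_approx_cst r 0) _ _ _ _ _ => *;
  by rewrite ?deriv0 !horner0 ?mul0r.
have H := affine_approxD (affine_approxM IH Hg) (affine_approx_cst r k).
apply: eq_affine_approx H _ _ _ _ _ => *;
by rewrite ?derivMXaddC !(hornerMXaddC, hornerD, hornerM, hornerX); ring.
Qed.

Lemma affine_approx_eval2 r (P : poly2 R) g g0 d1 d2 d3 g' g0' d1' d2' d3' :
  affine_approx r g g0 d1 d2 d3 -> affine_approx r g' g0' d1' d2' d3' ->
  exists e e', affine_approx r (fun h1 h2 h3 => eval2 P (g h1 h2 h3) (g' h1 h2 h3))
    (eval2 P g0 g0') (e * d1 + e' * d1') (e * d2 + e' * d2') (e * d3 + e' * d3').
Proof.
have eval2_MXaddC (Q : poly2 R) c x y : eval2 (Q * 'X + c%:P) x y = eval2 Q x y * y + c.[x].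
  by rewrite /eval2 hornerMXaddC hornerD hornerM hornerC.
move=> Hg Hg'; elim/poly_ind: P => [|Q c [e [e' IH]]].
  exists 0, 0; apply: eq_affine_approx (affine_approx_cst r 0) _ _ _ _ _ => *;
  by rewrite ?mul0r ?addr0 // /eval2 !horner0.
have H := affine_approxD (affine_approxM IH Hg') (affine_approx_horner c Hg).
exists (g0' * e + c^`().[g0]), (eval2 Q g0 g0' + g0' * e').
by apply: eq_affine_approx H _ _ _ _ _ => *; rewrite ?eval2_MXaddC //; ring.
Qed.

Lemma affine_approx_eval2_shift r (P : poly2 R) t1 t2 : exists a1 a2,
  affine_approx r (fun h1 h2 _ => eval2 P (t1 + h1) (t2 + h2)) (eval2 P t1 t2) a1 a2 0.
Proof.
have [e [e' H]] :=
  affine_approx_eval2 P (affine_approx_shift1 r t1) (affine_approx_shift2 r t2).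
by exists e, e'; apply: eq_affine_approx H _ _ _ _ _ => //; ring.
Qed.

Lemma nrm_ge_half_near f (f0 : C) (M r : R) : 0 < r -> 0 <= M -> f0 != 0 ->
  (forall h1 h2 h3, nrm h1 <= r -> nrm h2 <= r -> nrm h3 <= r ->
     nrm (f h1 h2 h3 - f0) <= M * l1nrm3 h1 h2 h3) ->
  exists2 rho : R, 0 < rho <= r & forall h1 h2 h3,
    nrm h1 <= rho -> nrm h2 <= rho -> nrm h3 <= rho -> nrm f0 / 2 <= nrm (f h1 h2 h3).
Proof.
move=> r0 M0 f00 Hf; have nf0 := nrm_gt0 f00.
pose rho := Num.min r (nrm f0 / (6 * (M + 1))).
have rho0 : 0 < rho by rewrite lt_min r0 divr_gt0 //; lra.
have rhor : rho <= r by rewrite ge_min lexx.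
have rhoM : 6 * (M + 1) * rho <= nrm f0.
  by rewrite mulrC -ler_pdivlMr ?ge_min ?lexx ?orbT //; lra.
exists rho => [|h1 h2 h3 b1 b2 b3]; first by rewrite rho0.
have := Hf _ _ _ (le_trans b1 rhor) (le_trans b2 rhor) (le_trans b3 rhor).
have : l1nrm3 h1 h2 h3 <= 3 * rho by rewrite /l1nrm3; lra.
have := l1nrm3_ge0 h1 h2 h3; have := lerB_nrmB f0 (f h1 h2 h3); rewrite nrm_distC.
by nra.
Qed.

End AffineApprox.

Section Reflection.
Variable R : realType.
Local Notation C := R[i].

Lemma inv_conj_expansion (t h : C) : nrm t = 1 -> nrm h <= 2^-1 ->
  nrm ((Num.conj (t + h))^-1 - t) <= 2 * nrm h /\
  nrm ((Num.conj (t + h))^-1 - t + t ^+ 2 * Num.conj h) <= 2 * nrm h ^+ 2.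
Proof.
move=> t1 hs; set k := _ - t.
have t0 := unimodular_neq0 t1.
have zb : 2^-1 <= nrm (t + h) by have := lerB_nrmD t h; rewrite t1; lra.
have z0 : Num.conj (t + h) != 0.
  by apply: contraTneq zb => e; rewrite -nrm_conj e nrm0; lra.
have ke : k * Num.conj (t + h) = - (t * Num.conj h).
  rewrite /k mulrBl mulVf // rmorphD /= (unimodular_conj t1) mulrDr mulrV //; ring.
have nk : nrm k * nrm (t + h) = nrm h.
  by rewrite -(nrm_conj (t + h)) -nrmM ke nrmN nrmM t1 nrm_conj mul1r.
have k0 := nrm_ge0 k; have h0 := nrm_ge0 h.
have kb : nrm k <= 2 * nrm h by nra.
split => //.
have -> : k + t ^+ 2 * Num.conj h = - (t * Num.conj h) * k.
  have e2 : k = - (t * Num.conj h) / Num.conj (t + h) by rewrite -ke mulfK.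
  have e3 : (Num.conj (t + h))^-1 = k + t by rewrite /k subrK.
  by rewrite {1}e2 e3; field.
by rewrite nrmM nrmN nrmM t1 nrm_conj mul1r; nra.
Qed.

(* Since [1 / conj t = t] on the unit circle, reflecting [z] to [1 / conj z]
   near [t] acts to first order as [h |-> - t^2 conj h]. *)
Lemma affine_approx_reflect (t1 t2 : C) (F : C -> C -> C) (F0 a1 a2 : C) :
  nrm t1 = 1 -> nrm t2 = 1 ->
  affine_approx 1 (fun h1 h2 _ => F (t1 + h1) (t2 + h2)) F0 a1 a2 0 ->
  affine_approx (2^-1)
    (fun h1 h2 _ => Num.conj (F (Num.conj (t1 + h1))^-1 (Num.conj (t2 + h2))^-1))
    (Num.conj F0) (- Num.conj (a1 * t1 ^+ 2)) (- Num.conj (a2 * t2 ^+ 2)) 0.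
Proof.
move=> n1 n2 [K K0 HF].
exists (4 * K + 2 * (nrm a1 + nrm a2)).
  by have := nrm_ge0 a1; have := nrm_ge0 a2; lra.
move=> h1 h2 h3 b1 b2 _.
have [kb1 ke1] := inv_conj_expansion n1 b1; have [kb2 ke2] := inv_conj_expansion n2 b2.
set k1 := _ - t1 in kb1 ke1; set k2 := _ - t2 in kb2 ke2.
have ek1 : (Num.conj (t1 + h1))^-1 = t1 + k1 by rewrite /k1 subrKC.
have ek2 : (Num.conj (t2 + h2))^-1 = t2 + k2 by rewrite /k2 subrKC.
have := HF k1 k2 0; rewrite nrm0 ler01 /l1nrm3 nrm0 addr0.
move=> /(_ ltac:(have := nrm_ge0 h1; lra) ltac:(have := nrm_ge0 h2; lra) isT).
rewrite ek1 ek2; set E := F _ _ - _ => HE.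
have -> : Num.conj (F (t1 + k1) (t2 + k2)) - (Num.conj F0 +
      (- Num.conj (a1 * t1 ^+ 2) * h1 + - Num.conj (a2 * t2 ^+ 2) * h2 + 0 * h3))
    = Num.conj (E + a1 * (k1 + t1 ^+ 2 * Num.conj h1) + a2 * (k2 + t2 ^+ 2 * Num.conj h2)).
  by rewrite /E !(rmorphD, rmorphN, rmorphB, rmorphM, rmorphXn) /= !conjCK; ring.
rewrite nrm_conj; apply: le_trans (nrmD _ _) _.
apply: le_trans (lerD (nrmD _ _) (lexx _)) _; rewrite !nrmM.
have := nrm_ge0 h1; have := nrm_ge0 h2; have := nrm_ge0 h3.
have := nrm_ge0 k1; have := nrm_ge0 k2; have := nrm_ge0 a1; have := nrm_ge0 a2.
rewrite /l1nrm3; set x1 := nrm h1 in kb1 ke1 *; set x2 := nrm h2 in kb2 ke2 *.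
set x3 := nrm h3; set B1 := nrm (k1 + _) in ke1 *; set B2 := nrm (k2 + _) in ke2 *.
move=> a20 a10 k20 k10 x30 x20 x10; set s := x1 + x2 + x3.
have s1 : (nrm k1 + nrm k2) ^+ 2 <= 4 * s ^+ 2.
  have : nrm k1 + nrm k2 <= 2 * s by rewrite /s; lra.
  have : 0 <= nrm k1 + nrm k2 by lra.
  by move=> *; nra.
have e1 : K * (nrm k1 + nrm k2) ^+ 2 <= 4 * K * s ^+ 2 by nra.
have s2 : x1 ^+ 2 <= s ^+ 2 by rewrite /s; nra.
have s3 : x2 ^+ 2 <= s ^+ 2 by rewrite /s; nra.
have e2 : nrm a1 * B1 <= 2 * nrm a1 * s ^+ 2 by nra.
have e3 : nrm a2 * B2 <= 2 * nrm a2 * s ^+ 2 by nra.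
lra.
Qed.

Lemma eval2_refl_unimodular (m n : nat) (P Pt : poly2 R) (t1 t2 : C) :
  is_refl2 m n P Pt -> nrm t1 = 1 -> nrm t2 = 1 ->
  eval2 Pt t1 t2 = t1 ^+ m * t2 ^+ n * Num.conj (eval2 P t1 t2).
Proof.
move=> HP n1 n2; rewrite HP ?unimodular_neq0 //.
by rewrite (unimodular_conj n1) (unimodular_conj n2) !invrK.
Qed.

End Reflection.

Section Decomposition.
Variable R : realType.
Local Notation C := R[i].
Variables (m n : nat) (p pt : poly3 R) (p1 p2 : poly2 R).
Hypotheses (Hdec : p = p1%:P + 'X * p2%:P) (Hpt : is_refl3 m n p pt)
  (Hzf : zero_free_D3 p).

Lemma eval3_dec (z1 z2 z3 : C) :
  eval3 p z1 z2 z3 = eval2 p1 z1 z2 + z3 * eval2 p2 z1 z2.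
Proof. by rewrite Hdec /eval3 /eval2 !hornerE. Qed.

Lemma eval3_refl_dec (z1 z2 z3 : C) : z1 != 0 -> z2 != 0 -> z3 != 0 ->
  eval3 pt z1 z2 z3 = z1 ^+ m * z2 ^+ n *
    (z3 * Num.conj (eval2 p1 (Num.conj z1)^-1 (Num.conj z2)^-1)
     + Num.conj (eval2 p2 (Num.conj z1)^-1 (Num.conj z2)^-1)).
Proof.
move=> z10 z20 z30; rewrite Hpt // eval3_dec rmorphD rmorphM rmorphV /= ?conjCK.
  by field.
by rewrite unitfE conjC_eq0.
Qed.

(* Otherwise [z3 := - p1 / p2] would be a zero of [p] in the tridisk. *)
Lemma nrm_eval2_p2_le_p1 (z1 z2 : C) :
  nrm z1 < 1 -> nrm z2 < 1 -> nrm (eval2 p2 z1 z2) <= nrm (eval2 p1 z1 z2).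
Proof.
move=> z1D z2D; rewrite leNgt; apply/negP => lt21.
have b0 : eval2 p2 z1 z2 != 0.
  by apply: contraTneq lt21 => ->; rewrite nrm0 -leNgt nrm_ge0.
pose z3 := - eval2 p1 z1 z2 / eval2 p2 z1 z2.
have z3D : nrm z3 < 1 by rewrite nrmM nrmN nrmV ltr_pdivrMr ?mul1r // nrm_gt0.
by have /negP[] := Hzf z1D z2D z3D; rewrite eval3_dec divfK // subrr.
Qed.

Lemma nrm_eval3_ge_p2 (z1 z2 z3 : C) : nrm z1 < 1 -> nrm z2 < 1 ->
  nrm (eval2 p2 z1 z2) * (1 - nrm z3) <= nrm (eval3 p z1 z2 z3).
Proof.
move=> z1D z2D; have := nrm_eval2_p2_le_p1 z1D z2D.
have := lerB_nrmD (eval2 p1 z1 z2) (z3 * eval2 p2 z1 z2).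
by rewrite eval3_dec nrmM; lra.
Qed.

Lemma eval2_dec_eq0_of_roots_pm1 (t1 t2 : C) :
  eval3 p t1 t2 1 = 0 -> eval3 p t1 t2 (-1) = 0 ->
  eval2 p1 t1 t2 = 0 /\ eval2 p2 t1 t2 = 0.
Proof.
rewrite !eval3_dec mul1r mulN1r.
set a := eval2 p1 t1 t2; set b := eval2 p2 t1 t2 => e1 e2.
have b0 : b = 0.
  have : b *+ 2 = (a + b) - (a + - b) by ring.
  by rewrite e1 e2 subrr => /eqP; rewrite mulrn_eq0 => /eqP.
by split => //; move: e1; rewrite b0 addr0.
Qed.

Lemma nrm_ratfun3_sub (z1 z2 z3 L : C) : eval3 p z1 z2 z3 != 0 ->
  nrm (ratfun3 p pt z1 z2 z3 - L) * nrm (eval3 p z1 z2 z3)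
    = nrm (eval3 pt z1 z2 z3 - L * eval3 p z1 z2 z3).
Proof. by move=> p0; rewrite -nrmM; congr nrm; rewrite /ratfun3; field. Qed.

End Decomposition.

Section Alignment.
Variable R : realType.
Local Notation C := R[i].

Lemma ge0_of_le_mul_small (x B e0 : R) : 0 < e0 ->
  (forall e, 0 < e <= e0 -> - x <= e * B) -> 0 <= x.
Proof.
move=> e00 H; apply/ler_addgt0Pr => eps eps0.
pose e := Num.min e0 (eps / (`|B| + 1)).
have e0e : 0 < e by rewrite lt_min e00 divr_gt0 // ltr_wpDl.
have ee0 : e <= e0 by rewrite ge_min lexx.
have eeps : e * (`|B| + 1) <= eps.
  by rewrite -ler_pdivlMr ?ltr_wpDl // ge_min lexx orbT.
have := H e; rewrite e0e ee0 => /(_ isT).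
by have := ler_norm B; nra.
Qed.

(* Since [Y e = - e v + O(e^2)] and [U e = om + O(e)], the last hypothesis
   reads [- 2 e Re (v conj om) <= O(e^2)]. *)
Lemma ray_Re_ge0 (Y U : R -> C) (v om : C) (K M e0 : R) :
  0 < e0 -> 0 <= K -> 0 <= M ->
  (forall e, 0 < e <= e0 -> nrm (Y e + e%:C * v) <= K * e ^+ 2) ->
  (forall e, 0 < e <= e0 -> nrm (U e - om) <= M * e) ->
  (forall e, 0 < e <= e0 -> 2 * complex.Re (Y e * Num.conj (U e)) <= nrm (Y e) ^+ 2) ->
  0 <= complex.Re (v * Num.conj om).
Proof.
move=> e00 K0 M0 HY HU HF.
pose Q := 2 * (nrm v * M + K * (nrm om + M * e0)) + (nrm v + K * e0) ^+ 2.
apply: (@ge0_of_le_mul_small _ (Q / 2) e0) => // e /andP[e0e ee0].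
have ee : 0 < e <= e0 by apply/andP.
set E := Y e + e%:C * v; set D := U e - om.
have nE : nrm E <= K * e ^+ 2 := HY e ee.
have nD : nrm D <= M * e := HU e ee.
set W := E * Num.conj (U e) - e%:C * v * Num.conj D.
have ReYU : complex.Re (Y e * Num.conj (U e))
    = - e * complex.Re (v * Num.conj om) + complex.Re W.
  have -> : Y e * Num.conj (U e) = (- e)%:C * (v * Num.conj om) + W.
    by rewrite /W /E /D rmorphB /=; ring.
  by case: (v * _) => a b; case: W => c d /=; ring.
have nU : nrm (U e) <= nrm om + M * e0.
  have -> : U e = om + D by rewrite /D subrKC.
  by apply: le_trans (nrmD _ _) _; have := ler_wpM2l M0 ee0; lra.
have nW : nrm W <= e ^+ 2 * (nrm v * M + K * (nrm om + M * e0)).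
  apply: le_trans (nrmD _ _) _; rewrite nrmN !nrmM !nrm_conj nrm_real; last lra.
  have EU : nrm E * nrm (U e) <= K * e ^+ 2 * (nrm om + M * e0).
    by apply: ler_pM => //; exact: nrm_ge0.
  have vD : e * nrm v * nrm D <= e * nrm v * (M * e).
    by apply: ler_wpM2l => //; apply: mulr_ge0; [lra | exact: nrm_ge0].
  nra.
have nY : nrm (Y e) <= e * (nrm v + K * e0).
  have -> : Y e = E - e%:C * v by rewrite /E addrK.
  have Ke : K * e ^+ 2 <= e * (K * e0).
    by rewrite expr2 mulrCA; apply: ler_wpM2l; [lra | apply: ler_wpM2l].
  by apply: le_trans (nrmD _ _) _; rewrite nrmN nrmM nrm_real; [nra | lra].
have := HF e ee; rewrite ReYU.
have := Re_ge_Nnrm W; have := nrm_ge0 (Y e); have := nrm_ge0 v.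
rewrite /Q; nra.
Qed.

Lemma nrm_unit_ray_lt1 (t w : C) (e : R) : nrm t = 1 -> complex.Re w = 1 ->
  0 < e -> e * nrm w ^+ 2 < 2 -> nrm (t - e%:C * t * w) < 1.
Proof.
move=> t1 w1 e0 ew; have -> : t - e%:C * t * w = t * (1 - e%:C * w) by ring.
rewrite nrmM t1 mul1r.
have : nrm (1 - e%:C * w) ^+ 2 < 1.
  move: ew; rewrite !sqr_nrm; case: w w1 => a b /= ->; nra.
by have := nrm_ge0 (1 - e%:C * w); nra.
Qed.

Lemma Re_directional_ge0 (t1 t2 : C) (Y U : C -> C -> C -> C) (om c1 c2 w1 w2 : C)
    (M : R) :
  nrm t1 = 1 -> nrm t2 = 1 -> complex.Re w1 = 1 -> complex.Re w2 = 1 ->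
  affine_approx (2^-1) Y 0 c1 c2 0 -> 0 <= M ->
  (forall h1 h2 h3, nrm h1 <= 2^-1 -> nrm h2 <= 2^-1 -> nrm h3 <= 2^-1 ->
     nrm (U h1 h2 h3 - om) <= M * l1nrm3 h1 h2 h3) ->
  (forall h1 h2, nrm (t1 + h1) < 1 -> nrm (t2 + h2) < 1 ->
     2 * complex.Re (Y h1 h2 0 * Num.conj (U h1 h2 0)) <= nrm (Y h1 h2 0) ^+ 2) ->
  0 <= complex.Re ((c1 * t1 * w1 + c2 * t2 * w2) * Num.conj om).
Proof.
move=> n1 n2 w11 w21 [K K0 HY] M0 HU HF.
set W := nrm w1 + nrm w2.
have W2 : 2 <= W by have := Re_le_nrm w1; have := Re_le_nrm w2; rewrite /W; lra.
have W0 : 0 < W ^+ 2 by apply: exprn_gt0; lra.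
pose h (t w : C) (e : R) := - (e%:C * t * w).
have nh t w e : nrm t = 1 -> 0 <= e -> nrm (h t w e) = e * nrm w.
  by move=> nt e0; rewrite /h nrmN !nrmM nt mulr1 nrm_real.
have nw1 : nrm w1 <= W by rewrite /W; have := nrm_ge0 w2; lra.
have nw2 : nrm w2 <= W by rewrite /W; have := nrm_ge0 w1; lra.
have small e : 0 < e <= (W ^+ 2)^-1 ->
    [/\ nrm (h t1 w1 e) <= 2^-1, nrm (h t2 w2 e) <= 2^-1,
        e * nrm w1 ^+ 2 < 2 & e * nrm w2 ^+ 2 < 2].
  move=> /andP[e0 eW]; have eW2 : e * W ^+ 2 <= 1 by rewrite -ler_pdivlMr // div1r.
  have := nrm_ge0 w1; have := nrm_ge0 w2; move: eW2; rewrite !nh ?expr2 //; try lra.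
  by move=> *; split; nra.
apply: (@ray_Re_ge0 (fun e => Y (h t1 w1 e) (h t2 w2 e) 0)
          (fun e => U (h t1 w1 e) (h t2 w2 e) 0) _ _ (K * W ^+ 2) (M * W) (W ^+ 2)^-1).
- by rewrite invr_gt0.
- by rewrite mulr_ge0 // ltW.
- by rewrite mulr_ge0 //; lra.
all: move=> e ee; have [b1 b2 lt1 lt2] := small e ee; have /andP[e0 _] := ee.
all: have b3 : nrm (0 : C) <= 2^-1 by rewrite nrm0; lra.
all: have l1 : l1nrm3 (h t1 w1 e) (h t2 w2 e) 0 = e * W
       by rewrite /l1nrm3 !nh ?nrm0 ?addr0 /W //; [ring | lra | lra].
- have := HY _ _ _ b1 b2 b3; rewrite l1 /h; congr (nrm _ <= _); last by ring.
  by rewrite add0r; ring.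
- by rewrite mulrAC -mulrA -l1; apply: HU.
- by apply: HF; apply: nrm_unit_ray_lt1.
Qed.

Lemma Im_eq0_of_Re_ge0 (x y : C) :
  (forall s : R, 0 <= complex.Re (x * (1 +i* s) + y)) -> complex.Im x = 0.
Proof.
case: x y => a b [c d] /= H; apply/eqP; apply: contraT => b0.
have := H ((`|a + c| + 1) / b); rewrite mulrCA mulfV // mulr1.
by have := ler_norm (a + c); lra.
Qed.

(* With [Y = p1 + t3 p2] and [U = t3 p2] the last hypothesis says [|p2| <= |p1|]. *)
Lemma alignment (t1 t2 : C) (Y U : C -> C -> C -> C) (om c1 c2 : C) (M : R) :
  nrm t1 = 1 -> nrm t2 = 1 ->
  affine_approx (2^-1) Y 0 c1 c2 0 -> 0 <= M ->
  (forall h1 h2 h3, nrm h1 <= 2^-1 -> nrm h2 <= 2^-1 -> nrm h3 <= 2^-1 ->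
     nrm (U h1 h2 h3 - om) <= M * l1nrm3 h1 h2 h3) ->
  (forall h1 h2, nrm (t1 + h1) < 1 -> nrm (t2 + h2) < 1 ->
     2 * complex.Re (Y h1 h2 0 * Num.conj (U h1 h2 0)) <= nrm (Y h1 h2 0) ^+ 2) ->
  Num.conj (c1 * t1 * Num.conj om) = c1 * t1 * Num.conj om /\
  Num.conj (c2 * t2 * Num.conj om) = c2 * t2 * Num.conj om.
Proof.
move=> n1 n2 HY M0 HU HF; split; apply: conj_id_of_Im0.
- apply: (@Im_eq0_of_Re_ge0 _ (c2 * t2 * Num.conj om)) => s.
  rewrite (_ : _ + _ = (c1 * t1 * (1 +i* s) + c2 * t2 * 1) * Num.conj om); last by ring.
  exact: (Re_directional_ge0 n1 n2 _ _ HY M0 HU HF).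
- apply: (@Im_eq0_of_Re_ge0 _ (c1 * t1 * Num.conj om)) => s.
  rewrite (_ : _ + _ = (c1 * t1 * 1 + c2 * t2 * (1 +i* s)) * Num.conj om); last by ring.
  exact: (Re_directional_ge0 n1 n2 _ _ HY M0 HU HF).
Qed.

End Alignment.

Section NontangentialLimit.
Variable R : realType.
Local Notation C := R[i].
Implicit Types (f : C -> C -> C -> C) (t z L : C).

Lemma nrm_le_nrm3 (a b c : C) :
  [/\ nrm a <= nrm3 a b c, nrm b <= nrm3 a b c & nrm c <= nrm3 a b c].
Proof. by rewrite /nrm3 !le_max !lexx !orbT. Qed.

Lemma l1nrm3_le_nrm3 (a b c : C) : l1nrm3 a b c <= 3 * nrm3 a b c.
Proof. by have [] := nrm_le_nrm3 a b c; rewrite /l1nrm3; lra. Qed.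

Lemma nrm3_lt1 z1 z2 z3 : nrm z1 < 1 -> nrm z2 < 1 -> nrm z3 < 1 -> nrm3 z1 z2 z3 < 1.
Proof. by move=> *; rewrite /nrm3 !gt_max; apply/and3P. Qed.

Lemma ntlim_of_cone_bound f t1 t2 t3 L (rho : R) : 0 < rho ->
  (forall c : R, 0 < c -> exists2 K : R, 0 <= K & forall z1 z2 z3,
     nrm z1 < 1 -> nrm z2 < 1 -> nrm z3 < 1 ->
     nrm3 (z1 - t1) (z2 - t2) (z3 - t3) <= rho ->
     nrm3 (z1 - t1) (z2 - t2) (z3 - t3) <= c * (1 - nrm3 z1 z2 z3) ->
     nrm (f z1 z2 z3 - L) <= K * nrm3 (z1 - t1) (z2 - t2) (z3 - t3)) ->
  ntlim f t1 t2 t3 L.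
Proof.
move=> rho0 Hcone c c0 eps eps0; have [K K0 HK] := Hcone c c0.
exists (Num.min rho (eps / (K + 1))); first by rewrite lt_min rho0 divr_gt0 //; lra.
move=> z1 z2 z3 z1D z2D z3D; rewrite lt_min => /andP[Hrho Heps] Hc.
apply: le_lt_trans (HK _ _ _ z1D z2D z3D (ltW Hrho) Hc) _.
move: Heps; rewrite ltr_pdivlMr; last lra.
by have [+ _ _] := nrm_le_nrm3 (z1 - t1) (z2 - t2) (z3 - t3); have := nrm_ge0 (z1 - t1); nra.
Qed.

Lemma nrm_radial (r : R) t : 0 <= r <= 1 -> nrm t = 1 ->
  nrm (r%:C * t) = r /\ nrm (r%:C * t - t) = 1 - r.
Proof.
move=> /andP[r0 r1] t1; rewrite nrmM t1 mulr1 nrm_real //; split => //.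
have -> : r%:C * t - t = - ((1 - r)%:C * t) by rewrite rmorphB /=; ring.
by rewrite nrmN nrmM t1 mulr1 nrm_real // subr_ge0.
Qed.

(* Both limits are approached along the radius [(1 - d/2) t] in the cone of
   aperture 1. *)
Lemma ntlim_unique f t1 t2 t3 L1 L2 : nrm t1 = 1 -> nrm t2 = 1 -> nrm t3 = 1 ->
  ntlim f t1 t2 t3 L1 -> ntlim f t1 t2 t3 L2 -> L1 = L2.
Proof.
move=> n1 n2 n3 H1 H2; apply/eqP; rewrite -subr_eq0; apply: contraT => L12; exfalso.
pose eps := nrm (L1 - L2) / 2; have eps0 : 0 < eps by rewrite divr_gt0 ?nrm_gt0.
have [d1 d10 D1] := H1 1 ltr01 eps eps0; have [d2 d20 D2] := H2 1 ltr01 eps eps0.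
pose d := Num.min 1 (Num.min d1 d2).
have d0 : 0 < d by rewrite !lt_min ltr01 d10 d20.
have [d1' dd1 dd2] : [/\ d <= 1, d <= d1 & d <= d2] by rewrite !ge_min !lexx !orbT.
pose r := 1 - d / 2; have r01 : 0 <= r <= 1 by apply/andP; rewrite /r; split; lra.
have [z1 h1] := nrm_radial r01 n1; have [z2 h2] := nrm_radial r01 n2.
have [z3 h3] := nrm_radial r01 n3.
have [zD1 zD2 zD3] : [/\ nrm (r%:C * t1) < 1, nrm (r%:C * t2) < 1 & nrm (r%:C * t3) < 1].
  by rewrite z1 z2 z3 /r; split; lra.
have Hz : nrm3 (r%:C * t1 - t1) (r%:C * t2 - t2) (r%:C * t3 - t3) = 1 - r.
  by rewrite /nrm3 h1 h2 h3 !maxxx.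
have Hc : nrm3 (r%:C * t1 - t1) (r%:C * t2 - t2) (r%:C * t3 - t3)
    <= 1 * (1 - nrm3 (r%:C * t1) (r%:C * t2) (r%:C * t3)).
  by rewrite Hz /nrm3 z1 z2 z3 !maxxx mul1r.
have := D1 _ _ _ zD1 zD2 zD3 ltac:(rewrite Hz /r; lra) Hc.
have := D2 _ _ _ zD1 zD2 zD3 ltac:(rewrite Hz /r; lra) Hc.
set fz := f _ _ _; have := nrmD (L1 - fz) (fz - L2).
by rewrite nrm_distC (_ : L1 - fz + (fz - L2) = L1 - L2) /eps; [lra | ring].
Qed.

End NontangentialLimit.

(* Read [A, B, c, s] as [conj a_j, conj b_j, a_j + t3 b_j, t3]; the premise is the
   reality of [c t_j conj (t3 b)] from [alignment]. *)
Lemma first_order_coef_eq (R : realType) (T t s b c A B : R[i]) :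
  t != 0 -> s != 0 -> b != 0 ->
  (A + s^-1 * B) * t^-1 * (s * b) = c * t * (s^-1 * Num.conj b) ->
  T * - (s * (A * (t^-1 * t^-1)) + B * (t^-1 * t^-1)) = T * Num.conj b / (- s * b) * c.
Proof.
move=> t0 s0 b0 E.
have -> : s * (A * (t^-1 * t^-1)) + B * (t^-1 * t^-1)
    = (A + s^-1 * B) * t^-1 * (s * b) * (t^-1 / b) by field; rewrite ?t0 ?s0 ?b0.
by rewrite E; field; rewrite ?t0 ?s0 ?b0.
Qed.

Section BoundaryLimit.
Variable R : realType.
Local Notation C := R[i].
Variables (m n : nat) (p pt : poly3 R) (p1 p2 : poly2 R).
Hypotheses (Hpt : is_refl3 m n p pt) (Hzf : zero_free_D3 p)
  (Hdec : p = p1%:P + 'X * p2%:P).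
Variables (t1 t2 t3 : C).
Hypotheses (n1 : nrm t1 = 1) (n2 : nrm t2 = 1) (n3 : nrm t3 = 1).
Hypotheses (Hb : eval2 p2 t1 t2 != 0) (Ha : eval2 p1 t1 t2 = - t3 * eval2 p2 t1 t2).
Variables (a1 a2 b1 b2 : C).
Hypotheses
  (Hp1 : affine_approx 1 (fun h1 h2 _ => eval2 p1 (t1 + h1) (t2 + h2)) (eval2 p1 t1 t2)
           a1 a2 0)
  (Hp2 : affine_approx 1 (fun h1 h2 _ => eval2 p2 (t1 + h1) (t2 + h2)) (eval2 p2 t1 t2)
           b1 b2 0).

Local Notation a := (eval2 p1 t1 t2).
Local Notation b := (eval2 p2 t1 t2).
Local Notation T := (t1 ^+ m * t2 ^+ n).
Local Notation mu := (t1 ^+ m * t2 ^+ n * Num.conj (eval2 p2 t1 t2) / eval2 p1 t1 t2).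
Local Notation pshift s3 := (fun h1 h2 h3 => eval3 p (t1 + h1) (t2 + h2) (s3 + h3)).
Local Notation ptshift s3 := (fun h1 h2 h3 => eval3 pt (t1 + h1) (t2 + h2) (s3 + h3)).
Local Notation monom := (fun h1 h2 (_ : C) => (t1 + h1) ^+ m * (t2 + h2) ^+ n).
Local Notation reflshift s3 := (fun h1 h2 h3 =>
  (s3 + h3) * Num.conj (eval2 p1 (Num.conj (t1 + h1))^-1 (Num.conj (t2 + h2))^-1)
  + Num.conj (eval2 p2 (Num.conj (t1 + h1))^-1 (Num.conj (t2 + h2))^-1)).

Lemma affine_approx_pshift s3 :
  affine_approx (2^-1) (pshift s3) (a + s3 * b) (a1 + s3 * b1) (a2 + s3 * b2) b.
Proof.
have half1 : (2^-1 : R) <= 1 by lra.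
have H := affine_approxD (affine_approx_le half1 Hp1)
  (affine_approxM (affine_approx_shift3 _ s3) (affine_approx_le half1 Hp2)).
by apply: eq_affine_approx H _ _ _ _ _ => *; rewrite ?(eval3_dec Hdec) //; ring.
Qed.

Lemma affine_approx_reflshift s3 :
  affine_approx (2^-1) (reflshift s3) (s3 * Num.conj a + Num.conj b)
    (- (s3 * Num.conj (a1 * t1 ^+ 2) + Num.conj (b1 * t1 ^+ 2)))
    (- (s3 * Num.conj (a2 * t2 ^+ 2) + Num.conj (b2 * t2 ^+ 2))) (Num.conj a).
Proof.
have H := affine_approxD (affine_approxM (affine_approx_shift3 _ s3)
  (affine_approx_reflect n1 n2 Hp1)) (affine_approx_reflect n1 n2 Hp2).
by apply: eq_affine_approx H _ _ _ _ _ => //; ring.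
Qed.

Lemma affine_approx_monom : exists c1 c2, affine_approx (2^-1) monom T c1 c2 0.
Proof.
have [c1 [c2 H]] := affine_approx_eval2_shift (2^-1) (('X^m)%:P * 'X^n) t1 t2.
exists c1, c2; apply: eq_affine_approx H _ _ _ _ _ => //.
  by move=> *; rewrite /eval2 !hornerE.
by rewrite /eval2 !hornerE.
Qed.

Lemma ptshift_factor s3 h1 h2 h3 : nrm s3 = 1 ->
  nrm h1 <= 2^-1 -> nrm h2 <= 2^-1 -> nrm h3 <= 2^-1 ->
  ptshift s3 h1 h2 h3 = monom h1 h2 h3 * reflshift s3 h1 h2 h3.
Proof.
by move=> ns3 *; rewrite /= (eval3_refl_dec Hdec Hpt) //; apply: unimodular_addr_neq0.
Qed.

Lemma pt_eq_mu_p_on_fiber s3 : T * (s3 * Num.conj a + Num.conj b) = mu * (a + s3 * b).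
Proof.
have t30 := unimodular_neq0 n3.
rewrite Ha !rmorphM rmorphN /= (unimodular_conj n3); field.
by rewrite t30 Hb.
Qed.

Lemma boundary_alignment :
  Num.conj ((a1 + t3 * b1) * t1 * Num.conj (t3 * b))
    = (a1 + t3 * b1) * t1 * Num.conj (t3 * b) /\
  Num.conj ((a2 + t3 * b2) * t2 * Num.conj (t3 * b))
    = (a2 + t3 * b2) * t2 * Num.conj (t3 * b).
Proof.
have half1 : (2^-1 : R) <= 1 by lra.
have HU := affine_approxZ t3 (affine_approx_le half1 Hp2).
have HY := affine_approxD (affine_approx_le half1 Hp1) HU.
have [M M0 LU] := affine_approx_lipschitz HU.
apply: (alignment n1 n2 _ M0 LU).
  by apply: eq_affine_approx HY _ _ _ _ _ => //; rewrite ?Ha; ring.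
move=> h1 h2 z1D z2D; have := nrm_eval2_p2_le_p1 Hdec Hzf z1D z2D.
set P1 := eval2 p1 _ _; set P2 := eval2 p2 _ _.
have := sqr_nrmB (P1 + t3 * P2) (t3 * P2); rewrite addrK nrmM n3 mul1r.
by have := nrm_ge0 P1; have := nrm_ge0 P2; nra.
Qed.

Lemma first_order_coefs_match :
  [/\ T * - (t3 * Num.conj (a1 * t1 ^+ 2) + Num.conj (b1 * t1 ^+ 2)) = mu * (a1 + t3 * b1),
      T * - (t3 * Num.conj (a2 * t2 ^+ 2) + Num.conj (b2 * t2 ^+ 2)) = mu * (a2 + t3 * b2)
    & T * Num.conj a = mu * b].
Proof.
have t10 := unimodular_neq0 n1; have t20 := unimodular_neq0 n2.
have t30 := unimodular_neq0 n3.
have [E1 E2] := boundary_alignment.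
move: E1 E2; rewrite Ha !(rmorphM, rmorphD, rmorphXn) /= !conjCK.
rewrite (unimodular_conj n1) (unimodular_conj n2) (unimodular_conj n3).
move=> E1 E2; split.
- exact: first_order_coef_eq E1.
- exact: first_order_coef_eq E2.
- by rewrite rmorphN /= (unimodular_conj n3); field; rewrite t30 Hb.
Qed.

Lemma affine_approx_numerator s3 : nrm s3 = 1 -> exists c1 c2 c3,
  affine_approx (2^-1) (fun h1 h2 h3 => ptshift s3 h1 h2 h3 - mu * pshift s3 h1 h2 h3)
    0 c1 c2 c3.
Proof.
move=> ns3; have [c1 [c2 HT]] := affine_approx_monom.
have HN := affine_approxD (affine_approxM HT (affine_approx_reflshift s3))
  (affine_approxZ (- mu) (affine_approx_pshift s3)).
do 3 eexists; apply: eq_affine_approx HN _ _ _ _ _ => //.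
  by move=> *; rewrite ptshift_factor //; ring.
by rewrite pt_eq_mu_p_on_fiber; ring.
Qed.

(* The first-order terms cancel exactly at the zero [t3]:
   [pt - mu p = (monom - T) X + (T X - mu p)] with both summands of order two. *)
Lemma numerator_quadratic : exists2 K : R, 0 <= K & forall h1 h2 h3,
  nrm h1 <= 2^-1 -> nrm h2 <= 2^-1 -> nrm h3 <= 2^-1 ->
  nrm (ptshift t3 h1 h2 h3 - mu * pshift t3 h1 h2 h3) <= K * l1nrm3 h1 h2 h3 ^+ 2.
Proof.
have [c1 [c2 HT]] := affine_approx_monom.
have HX := affine_approx_reflshift t3; have HP := affine_approx_pshift t3.
have [e1 e2 e3] := first_order_coefs_match.
have X0 : t3 * Num.conj a + Num.conj b = 0.
  rewrite Ha rmorphM rmorphN /= (unimodular_conj n3); field; exact: unimodular_neq0.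
have P0 : a + t3 * b = 0 by rewrite Ha; ring.
have HN := affine_approxD
  (affine_approxM (affine_approxD HT (affine_approx_cst _ (- T))) HX)
  (affine_approxD (affine_approxZ T HX) (affine_approxZ (- mu) HP)).
have [K K0 HK] : affine_approx (2^-1)
    (fun h1 h2 h3 => ptshift t3 h1 h2 h3 - mu * pshift t3 h1 h2 h3) 0 0 0 0.
  apply: eq_affine_approx HN _ _ _ _ _.
  - by move=> *; rewrite ptshift_factor //; ring.
  - by rewrite X0 P0; ring.
  - by rewrite X0 e1; ring.
  - by rewrite X0 e2; ring.
  - by rewrite X0 e3; ring.
exists K => // h1 h2 h3 hb1 hb2 hb3.
by have := HK _ _ _ hb1 hb2 hb3; rewrite !mul0r !addr0 subr0.
Qed.

Lemma ntlim_ratfun3_off_zero s3 : nrm s3 = 1 -> s3 != t3 ->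
  ntlim (ratfun3 p pt) t1 t2 s3 mu.
Proof.
move=> ns3 s3t3; have half0 : (0 : R) < 2^-1 by lra.
have [Mp Mp0 LP] := affine_approx_lipschitz (affine_approx_pshift s3).
have d00 : a + s3 * b != 0.
  by rewrite (_ : _ + _ = (s3 - t3) * b) ?mulf_neq0 ?subr_eq0 // Ha; ring.
have [rho /andP[rho0 rho_half] Hlow] := nrm_ge_half_near half0 Mp0 d00 LP.
have [c1 [c2 [c3 /affine_approx_lipschitz[MN MN0 LN]]]] := affine_approx_numerator ns3.
apply: (ntlim_of_cone_bound rho0) => c c0; exists (6 * MN / nrm (a + s3 * b)).
  by rewrite divr_ge0 ?nrm_ge0 // mulr_ge0.
move=> z1 z2 z3 z1D z2D z3D Hrho _.
set H := nrm3 _ _ _ in Hrho *.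
have [hb1 hb2 hb3] : [/\ nrm (z1 - t1) <= rho, nrm (z2 - t2) <= rho & nrm (z3 - s3) <= rho].
  by have [] := nrm_le_nrm3 (z1 - t1) (z2 - t2) (z3 - s3); rewrite -/H; split; lra.
have hh1 : nrm (z1 - t1) <= 2^-1 by lra.
have hh2 : nrm (z2 - t2) <= 2^-1 by lra.
have hh3 : nrm (z3 - s3) <= 2^-1 by lra.
have := Hlow _ _ _ hb1 hb2 hb3; have := LN _ _ _ hh1 hh2 hh3.
rewrite /= !subrKC subr0 => Hnum Hden.
have pz0 : eval3 p z1 z2 z3 != 0.
  by apply: contraTneq Hden => ->; rewrite nrm0 -ltNge divr_gt0 ?nrm_gt0.
rewrite [X in _ <= X]mulrAC ler_pdivlMr ?nrm_gt0 //.
have := nrm_ratfun3_sub pt mu pz0; have := l1nrm3_le_nrm3 (z1 - t1) (z2 - t2) (z3 - s3).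
have := nrm_ge0 (ratfun3 p pt z1 z2 z3 - mu); rewrite -/H.
by nra.
Qed.

Lemma ntlim_ratfun3_at_zero : ntlim (ratfun3 p pt) t1 t2 t3 mu.
Proof.
have half0 : (0 : R) < 2^-1 by lra.
have half1 : (2^-1 : R) <= 1 by lra.
have [K K0 HK] := numerator_quadratic.
have [M2 M20 L2] := affine_approx_lipschitz (affine_approx_le half1 Hp2).
have [rho /andP[rho0 rho_half] Hlow] := nrm_ge_half_near half0 M20 Hb L2.
apply: (ntlim_of_cone_bound rho0) => c c0; exists (18 * K * c / nrm b).
  by rewrite divr_ge0 ?nrm_ge0 // !mulr_ge0 // ltW.
move=> z1 z2 z3 z1D z2D z3D Hrho Hc.
set H := nrm3 _ _ _ in Hrho Hc *.
have [hb1 hb2 hb3] : [/\ nrm (z1 - t1) <= rho, nrm (z2 - t2) <= rho & nrm (z3 - t3) <= rho].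
  by have [] := nrm_le_nrm3 (z1 - t1) (z2 - t2) (z3 - t3); rewrite -/H; split; lra.
have hh1 : nrm (z1 - t1) <= 2^-1 by lra.
have hh2 : nrm (z2 - t2) <= 2^-1 by lra.
have hh3 : nrm (z3 - t3) <= 2^-1 by lra.
have := Hlow _ _ _ hb1 hb2 hb3; have := HK _ _ _ hh1 hh2 hh3.
rewrite /= !subrKC => Hnum Hp2z.
have [_ _ z3N] := nrm_le_nrm3 z1 z2 z3.
have N1 := nrm3_lt1 z1D z2D z3D; set N := nrm3 z1 z2 z3 in Hc z3N N1.
have Hden : nrm b / 2 * (1 - N) <= nrm (eval3 p z1 z2 z3).
  apply: le_trans (nrm_eval3_ge_p2 Hdec Hzf z3 z1D z2D); apply: ler_pM => //; try lra.
  by rewrite divr_ge0 ?nrm_ge0.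
have b0 := nrm_gt0 Hb.
have pz0 : eval3 p z1 z2 z3 != 0.
  apply: contraTneq Hden => ->; rewrite nrm0 -ltNge; apply: mulr_gt0; lra.
rewrite [X in _ <= X]mulrAC ler_pdivlMr //.
have := nrm_ratfun3_sub pt mu pz0; have := l1nrm3_le_nrm3 (z1 - t1) (z2 - t2) (z3 - t3).
have := nrm_ge0 (ratfun3 p pt z1 z2 z3 - mu); have := l1nrm3_ge0 (z1 - t1) (z2 - t2) (z3 - t3).
rewrite -/H; set F := nrm (ratfun3 _ _ _ _ _ - _); set S := l1nrm3 _ _ _ => S0 F0 SH E.
have H0 : 0 <= H by lra.
have s1 : F * (nrm b / 2 * (1 - N)) <= K * S ^+ 2.
  by rewrite -E in Hnum; apply: le_trans Hnum; apply: ler_wpM2l.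
have s2 : K * S ^+ 2 <= K * (9 * (H * (c * (1 - N)))).
  apply: ler_wpM2l => //; apply: le_trans (_ : S ^+ 2 <= 9 * H ^+ 2) _; first nra.
  by rewrite ler_pM2l // expr2; apply: ler_wpM2l.
have : F * nrm b / 2 * (1 - N) <= 9 * K * c * H * (1 - N) by move: s1 s2; rewrite !mulrA; nra.
by rewrite ler_pM2r; lra.
Qed.

Lemma ntlim_ratfun3_boundary s3 : nrm s3 = 1 -> ntlim (ratfun3 p pt) t1 t2 s3 mu.
Proof.
move=> ns3; case: (eqVneq s3 t3) => [-> | s3t3]; first exact: ntlim_ratfun3_at_zero.
exact: ntlim_ratfun3_off_zero.
Qed.

End BoundaryLimit.

Theorem lemma4p7 (R : realType) (m n : nat) (p pt : poly3 R)
  (p1 p2 pt2 : poly2 R)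
  (* p has degree (m,n,1); pt = p~ is its reflection *)
  (Hdeg : deg_le3 m n 1 p)
  (Hpt : is_refl3 m n p pt)
  (* phi = pt/p is a rational inner function: p zero-free on D^3,
     p and pt without common factors; phi irreducible *)
  (Hzf : zero_free_D3 p)
  (Hcop : no_common_factor3 p pt)
  (Hirr : irreducible3 p)
  (* p(z) = p1(z1,z2) + z3 p2(z1,z2), pt2 = reflection of p2 at (m,n) *)
  (Hdec : p = p1%:P + 'X * p2%:P)
  (Hpt2 : is_refl2 m n p2 pt2)
  (t1 t2 : R[i]) (Ht1 : nrm t1 = 1) (Ht2 : nrm t2 = 1) :
  ((exists! t3 : R[i], nrm t3 = 1 /\ eval3 p t1 t2 t3 = 0) ->
     forall lam : R[i], nrm lam = 1 ->
     forall t3' : R[i], nrm t3' = 1 ->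
       (ntlim (ratfun3 p pt) t1 t2 t3' lam <->
        eval2 ((lam%:P)%:P * p1 - pt2) t1 t2 = 0))
  /\
  ((forall t3 : R[i], nrm t3 = 1 -> eval3 p t1 t2 t3 = 0) ->
     forall lam : R[i], nrm lam = 1 -> eval2 ((lam%:P)%:P * p1 - pt2) t1 t2 = 0).
Proof.
have nm1 : nrm (-1 : R[i]) = 1 by rewrite nrmN nrm1.
have q_eval lam : eval2 ((lam%:P)%:P * p1 - pt2) t1 t2
    = lam * eval2 p1 t1 t2 - t1 ^+ m * t2 ^+ n * Num.conj (eval2 p2 t1 t2).
  by rewrite -(eval2_refl_unimodular Hpt2 Ht1 Ht2) /eval2 !hornerE.
split=> [[t3 [[n3 z3] t3_uniq]] lam _ s3 ns3 | Hall lam _].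
- have Hb : eval2 p2 t1 t2 != 0.
    apply/eqP => b0; have zero s : eval3 p t1 t2 s = 0.
      by move: z3; rewrite !(eval3_dec Hdec) b0 !mulr0.
    have := t3_uniq 1 (conj (nrm1 _) (zero 1)); have := t3_uniq (-1) (conj nm1 (zero _)).
    by move=> -> /eqP; rewrite eq_sym -addr_eq0 (_ : 1 + 1 = 2%:R) // pnatr_eq0.
  have Ha : eval2 p1 t1 t2 = - t3 * eval2 p2 t1 t2.
    by apply/eqP; rewrite mulNr -addr_eq0 -(eval3_dec Hdec) z3.
  have [a1 [a2 Hp1]] := affine_approx_eval2_shift 1 p1 t1 t2.
  have [b1 [b2 Hp2]] := affine_approx_eval2_shift 1 p2 t1 t2.
  have L := ntlim_ratfun3_boundary Hpt Hzf Hdec Ht1 Ht2 n3 Hb Ha Hp1 Hp2 ns3.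
  have a0 : eval2 p1 t1 t2 != 0 by rewrite Ha mulNr oppr_eq0 mulf_neq0 // unimodular_neq0.
  rewrite q_eval; split => [Hl | /eqP].
  + by rewrite (ntlim_unique Ht1 Ht2 ns3 Hl L) divfK // subrr.
  + by rewrite subr_eq0 => /eqP Hq; rewrite -Hq mulfK in L.
- have [a0 b0] := eval2_dec_eq0_of_roots_pm1 Hdec (Hall 1 (nrm1 _)) (Hall (-1) nm1).
  by rewrite q_eval a0 b0 mulr0 rmorph0 mulr0 subrr.
Qed.
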